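(* For each of the Coloring, K-SAT and NAE-K-SAT models, for all positive integers $N,M,m$ and every $0<\delta<1/2$, $$p(N,M+m)\ge\delta^m\,p(N,M)-(2\delta)^{M+1}\exp\big(\mathcal{H}(\delta)N+o(N)\big),$$ where $\mathcal{H}(\delta)=-\delta\log\delta-(1-\delta)\log(1-\delta)$ is the entropy function and the $o(N)$ term depends only on $N$ and $\delta$.
   Context: $\mathbb{G}(N,M)$: random hypergraph on $[N]$ with $M$ directed $K$-hyperedges chosen independently and uniformly from $[N]^K$. $\chi=\{0,\dots,q-1\}$; $H(x)=\sum_{e}H_e(x_e)$, $H(G)=\max_{x\in\chi^N}H(x)$. Models: $q$-Coloring ($K=2$, $H_e(x,y)=\mathbf 1[x\ne y]$); K-SAT ($q=2$, independent uniform $a_e\in\{0,1\}^K$ per hyperedge, $H_e(a_e)=0$, $1$ otherwise); NAE-K-SAT ($q=2$, $H_e(a_e)=H_e(\mathbf1-a_e)=0$, $1$ otherwise). $p(N,M)=\mathbb{P}(H(\mathbb{G}(N,M))=M)$. *)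

From mathcomp Require Import all_boot.
From Stdlib Require Import Reals.

Set Implicit Arguments.
Unset Strict Implicit.
Unset Printing Implicit Defensive.

(* The three models. Coloring q : q colors, K = 2.  KSAT K / NAEKSAT K : q = 2. *)
Inductive model : Type :=
| Coloring of nat
| KSAT of nat
| NAEKSAT of nat.

Definition valid_model (mdl : model) : Prop :=
  match mdl with
  | Coloring q => (2 <= q)%N
  | KSAT K => (2 <= K)%N
  | NAEKSAT K => (2 <= K)%N
  end.

Definition unif_prob (T : finType) (P : pred T) : R :=
  (INR #|P| / INR #|T|)%R.

(* Coloring: M directed edges chosen independently uniformly from [N]^2;
   a graph is "fully satisfied" (H(G) = M) iff some x in [q]^N has
   x(u) <> x(v) on every edge. *)
Definition col_sat (q N M : nat) (G : {ffun 'I_M -> 'I_N * 'I_N}) : bool :=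
  [exists x : {ffun 'I_N -> 'I_q}, [forall e, x (G e).1 != x (G e).2]].

(* K-SAT: each hyperedge is a K-tuple of vertices together with an independent
   uniform a_e in {0,1}^K (false = 0, true = 1); H_e(y) = 0 iff y = a_e. *)
Definition ksat_sat (K N M : nat)
    (G : {ffun 'I_M -> {ffun 'I_K -> 'I_N} * {ffun 'I_K -> bool}}) : bool :=
  [exists x : {ffun 'I_N -> bool},
    [forall e, [ffun j => x ((G e).1 j)] != (G e).2]].

(* NAE-K-SAT: H_e(y) = 0 iff y = a_e or y = 1 - a_e. *)
Definition naesat_sat (K N M : nat)
    (G : {ffun 'I_M -> {ffun 'I_K -> 'I_N} * {ffun 'I_K -> bool}}) : bool :=
  [exists x : {ffun 'I_N -> bool},
    [forall e, ([ffun j => x ((G e).1 j)] != (G e).2)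
            && ([ffun j => x ((G e).1 j)] != [ffun j => ~~ (G e).2 j])]].

(* p(N,M) = P(H(G(N,M)) = M). *)
Definition p (mdl : model) (N M : nat) : R :=
  match mdl with
  | Coloring q => unif_prob (@col_sat q N M)
  | KSAT K => unif_prob (@ksat_sat K N M)
  | NAEKSAT K => unif_prob (@naesat_sat K N M)
  end.

Definition Hent (d : R) : R :=
  (- d * ln d - (1 - d) * ln (1 - d))%R.

From mathcomp Require Import all_boot all_order all_algebra.
From Stdlib Require Import Reals Lra.
From mathcomp Require Import Rstruct.
(* Re-imported so that [%N] and [^] on [nat] are ssrnat's again, not [Reals]'. *)
From mathcomp Require Import ssrnat.
From mathcomp.algebra_tactics Require Import ring lra.
From mathcomp Require Import zify.
Import Order.TTheory GRing.Theory Num.Theory.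
Set Implicit Arguments.
Unset Strict Implicit.
Unset Printing Implicit Defensive.

(* Condition on G(N, M) being satisfied by some x.  Unless x satisfies fewer
   than a delta fraction of all possible constraints, each of the m further
   independent constraints is satisfied by x with probability at least delta,
   which gives the term delta^m p(N, M).  For K-SAT and NAE-K-SAT every
   assignment satisfies at least half of all constraints.  For colouring, an
   assignment properly colouring fewer than delta N^2 ordered pairs has a
   colour class of size above (1 - delta) N, whose complement, of size at most
   delta N, covers every edge of the graph.  A union bound over the at most
   exp(H(delta) N) such vertex sets bounds the probability of this event by
   (2 delta)^M exp(H(delta) N); the constant o(N) = -log(2 delta) absorbs the
   extra factor 2 delta of the statement. *)

Local Open Scope ring_scope.

Section FfunCat.
Variables (E : finType) (M m : nat).

Definition ffun_cat (f : {ffun 'I_M -> E}) (g : {ffun 'I_m -> E}) : {ffun 'I_(M + m) -> E} :=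
  [ffun i => match fintype.split i with inl j => f j | inr k => g k end].

Lemma ffun_cat_inj : injective (fun fg => ffun_cat fg.1 fg.2).
Proof.
move=> [f g] [f' g'] /= eq_fg; have at_i i := congr1 (fun h : {ffun _ -> E} => h i) eq_fg.
congr pair; apply/ffunP.
- by move=> j; have := at_i (lshift m j); rewrite !ffunE (unsplitK (inl _ j)).
- by move=> k; have := at_i (rshift M k); rewrite !ffunE (unsplitK (inr _ k)).
Qed.

Lemma sum_card_ffun_cat_le (C : pred {ffun 'I_M -> E}) (P : pred {ffun 'I_(M + m) -> E}) :
  (\sum_(f in C) #|[pred g | P (ffun_cat f g)]| <= #|P|)%N.
Proof.
rewrite (eq_bigr (fun f => \sum_(g | P (ffun_cat f g)) 1)); last by move=> f _; rewrite sum1_card.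
rewrite pair_big_dep /= sum1_card -(card_image (@ffun_cat_inj)).
apply/subset_leq_card/subsetP => _ /imageP[fg /andP[_ Pfg] ->].
exact: Pfg.
Qed.

End FfunCat.

Section RandomCSP.
Variables (X E : finType) (ok : X -> E -> bool).

(* A random CSP with [n] i.i.d. uniform constraints drawn from [E]; [ok x e]
   says that the assignment [x] satisfies the constraint [e]. *)
Definition csp_sat (n : nat) : pred {ffun 'I_n -> E} :=
  fun G => [exists x, [forall i, ok x (G i)]].
Arguments csp_sat : clear implicits.

(* A satisfiable [G] that is not [Bad] has a witness [x] satisfying at least
   [c] constraints, and [ffun_cat G g] is satisfiable whenever all the [m]
   constraints of [g] are among those. *)
Lemma card_csp_sat_extend (F : numDomainType) (c : F) (M m : nat) (Bad : pred {ffun 'I_M -> E}) :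
  0 <= c ->
  (forall G, csp_sat M G -> ~~ Bad G -> exists2 x, [forall i, ok x (G i)] & c <= #|ok x|%:R) ->
  c ^+ m * (#|csp_sat M|%:R - #|Bad|%:R) <= #|csp_sat (M + m)|%:R.
Proof.
move=> c_ge0 good.
pose C := [pred G | csp_sat M G && ~~ Bad G].
have le_C : #|csp_sat M|%:R - #|Bad|%:R <= #|C|%:R :> F.
  rewrite lerBlDr -natrD ler_nat -cardUI (leq_trans _ (leq_addr _ _)) //.
  apply/subset_leq_card/subsetP => G; rewrite !inE /= !unfold_in.
  by move=> satG; case: (Bad G); rewrite /= ?andbT ?orbF ?orbT.
have ext_C G : C G -> c ^+ m <= #|[pred g | csp_sat (M + m) (ffun_cat G g)]|%:R.
  case/andP=> satG /(good _ satG)[x satGx c_le].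
  apply: le_trans (_ : #|ok x|%:R ^+ m <= _); first by rewrite lerXn2r // nnegrE.
  rewrite -natrX ler_nat -[X in expn _ X]card_ord -card_ffun_on.
  apply/subset_leq_card/subsetP => g /ffun_onP ok_g; rewrite inE; apply/existsP; exists x.
  apply/forallP => i; rewrite ffunE.
  by case: fintype.split => [j|k]; [exact: (forallP satGx) | exact: ok_g].
apply: le_trans (ler_wpM2l (exprn_ge0 m c_ge0) le_C) _.
rewrite mulr_natr -sumr_const; apply: le_trans (ler_sum _ ext_C) _.
by rewrite -natr_sum ler_nat sum_card_ffun_cat_le.
Qed.

Lemma unif_prob_ffun n (P : pred {ffun 'I_n -> E}) : unif_prob P = #|P|%:R / #|E|%:R ^+ n.
Proof. by rewrite /unif_prob !INRE card_ffun card_ord natrX. Qed.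

Lemma unif_prob_csp_sat_extend (d : R) (M m : nat) (Bad : pred {ffun 'I_M -> E}) :
  0 <= d <= 1 -> (0 < #|E|)%N ->
  (forall G, csp_sat M G -> ~~ Bad G ->
     exists2 x, [forall i, ok x (G i)] & d * #|E|%:R <= #|ok x|%:R) ->
  d ^+ m * unif_prob (csp_sat M) - unif_prob Bad <= unif_prob (csp_sat (M + m)).
Proof.
move=> /andP[d_ge0 d_le1] E_gt0 good; rewrite !unif_prob_ffun.
have e_gt0 : 0 < #|E|%:R :> R by rewrite ltr0n.
have := card_csp_sat_extend m (mulr_ge0 d_ge0 (ltW e_gt0)) good.
set S := #|csp_sat M|%:R; set S' := #|csp_sat (M + m)|%:R; set B := #|Bad|%:R; set e := #|E|%:R.
have dm_le1 : d ^+ m <= 1 by rewrite exprn_ile1.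
have em_gt0 : 0 < e ^+ m by rewrite exprn_gt0.
rewrite ler_pdivlMr ?exprn_gt0 // exprMn => extend.
have -> : (d ^+ m * (S / e ^+ M) - B / e ^+ M) * e ^+ (M + m) = d ^+ m * e ^+ m * S - B * e ^+ m.
  by rewrite exprD; field; rewrite expf_neq0 // lt0r_neq0.
apply: le_trans extend; rewrite mulrBr lerD2l lerN2 mulrC mulrA.
by rewrite mulrAC ler_piMr ?mulr_ge0 ?(ltW em_gt0).
Qed.

End RandomCSP.
Arguments csp_sat {X E} ok n.

Lemma Rexp_ge0 (x : R) : 0 <= exp x.
Proof. exact/RleP/Rlt_le/exp_pos. Qed.

Lemma Rhalf_interval (d : R) : (0 < d < 1 / 2)%R -> 0 < d /\ d *+ 2 < 1.
Proof.
move=> d_bd; split; apply/RltP; first by rewrite -R0E; Lra.lra.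
by rewrite mulr2n -RplusE -R1E; Lra.lra.
Qed.

(* The logarithm of [d ^ k * (1 - d) ^ (n - k)] exceeds [- Hent d * n] by
   [(d n - k) (ln (1 - d) - ln d)], which is nonnegative since [d < 1 - d]. *)
Lemma entropy_weight_lb (d : R) (n k : nat) :
  (0 < d < 1 / 2)%R -> (k <= n)%N -> (INR k <= d * INR n)%R ->
  (exp (- (Hent d * INR n)) <= d ^ k * (1 - d) ^ (n - k))%R.
Proof.
move=> d_bd /ssrnat.leP le_kn le_k_dn.
have ln_lt : (ln d < ln (1 - d))%R by apply: ln_increasing; Lra.lra.
rewrite -(Rpower_pow k d) -?(Rpower_pow (n - k) (1 - d)); try Lra.lra.
rewrite /Rpower -exp_plus minus_INR //.
have [lt|eq] := Rle_lt_or_eq_dec _ _ (Rmult_le_pos (d * INR n - INR k) (ln (1 - d) - ln d)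
                 ltac:(Lra.lra) ltac:(Lra.lra)).
  by apply/Rlt_le/exp_increasing; rewrite /Hent; Lra.nra.
by right; congr exp; rewrite /Hent; Lra.nra.
Qed.

Definition small_sets (F : numDomainType) (V : finType) (d : F) : {set {set V}} :=
  [set S : {set V} | #|S|%:R <= d * #|V|%:R].

Lemma prod_if_in (F : comPzSemiRingType) (V : finType) (S : {set V}) (a b : F) :
  \prod_(v : V) (if v \in S then a else b) = a ^+ #|S| * b ^+ (#|V| - #|S|).
Proof.
rewrite (bigID (mem S)) /= (eq_bigr (fun=> a)) => [|v ->] //.
rewrite [X in _ * X](eq_bigr (fun=> b)) => [|v /negbTE -> //].
by rewrite !prodr_const -(cardC (mem S)) addKn.
Qed.

(* Each small [S] carries weight [d ^ #|S| (1 - d) ^ (n - #|S|) >= exp (- Hent d * n)]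
   under the product Bernoulli(d) distribution, whose total mass is 1. *)
Lemma card_small_sets (V : finType) (d : R) :
  (0 < d < 1 / 2)%R -> #|small_sets V d|%:R <= exp (Hent d * INR #|V|).
Proof.
move=> d_bd.
have [d_gt0 d_lt] := Rhalf_interval d_bd.
pose weight (S : {set V}) := \prod_(v : V) (if v \in S then d else 1 - d).
have weight_ge0 S : 0 <= weight S.
  by apply: prodr_ge0 => v _; case: ifP => _; lra.
have weight_lb S : S \in small_sets V d -> exp (- (Hent d * INR #|V|)) <= weight S.
  rewrite inE /weight prod_if_in -!RpowE => small_S; apply/RleP.
  apply: entropy_weight_lb => //; first exact: max_card.
  by rewrite !INRE; apply/RleP.
have total_weight : \sum_S weight S = 1.
  by rewrite /weight -bigA_distr big1 // => v _; apply: subrKC.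
have small_mass : #|small_sets V d|%:R * exp (- (Hent d * INR #|V|)) <= 1.
  rewrite mulr_natl -sumr_const -total_weight (le_trans (ler_sum _ weight_lb)) //.
  by rewrite [leRHS](bigID (mem (small_sets V d))) lerDl sumr_ge0.
have exp_inv : exp (- (Hent d * INR #|V|)) * exp (Hent d * INR #|V|) = 1.
  by rewrite -RmultE -exp_plus Rplus_opp_l exp_0.
have := ler_wpM2r (Rexp_ge0 (Hent d * INR #|V|)) small_mass.
by rewrite -mulrA exp_inv mulr1 mul1r.
Qed.

Lemma card_bigcup_le (I T : finType) (P : pred I) (B : I -> {set T}) :
  (#|\bigcup_(i | P i) B i| <= \sum_(i | P i) #|B i|)%N.
Proof.
apply: (big_rec2 (fun (U : {set T}) n => #|U| <= n)%N) => [|i U n _ le_Un].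
  by rewrite cards0.
by rewrite (leq_trans (leq_card_setU _ _)) // leq_add2l.
Qed.

Section Colouring.
Variable V : finType.

Definition covers (S : {set V}) (e : V * V) : bool := (e.1 \in S) || (e.2 \in S).

Definition has_small_cover (F : numDomainType) (d : F) (M : nat) : pred {ffun 'I_M -> V * V} :=
  fun G => [exists S in small_sets V d, [forall i, covers S (G i)]].
Arguments has_small_cover {F} d M.

Lemma card_covers (S : {set V}) : (#|covers S| <= 2 * #|S| * #|V|)%N.
Proof.
rewrite mul2n -addnn mulnDl {2}mulnC -(cardsT V) -!cardsX.
apply: leq_trans (leq_card_setU _ _); apply/subset_leq_card/subsetP => -[u v].
by rewrite !inE /covers /= andbT; case/orP=> ->; rewrite ?orbT.
Qed.

Lemma card_has_small_cover (F : numDomainType) (d : F) (M : nat) : 0 <= d ->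
  #|has_small_cover d M|%:R <= #|small_sets V d|%:R * (d *+ 2 * #|V|%:R ^+ 2) ^+ M.
Proof.
move=> d_ge0.
pose bound := (\sum_(S in small_sets V d) #|covers S| ^ M)%N.
have union_bound : (#|has_small_cover d M| <= bound)%N.
  rewrite /bound; under eq_bigr do rewrite -[M in (_ ^ M)%N]card_ord -card_ffun_on -cardsE.
  apply: leq_trans (card_bigcup_le _ _); apply/subset_leq_card/subsetP => G.
  case/exists_inP => S small_S /forallP cov; apply/bigcupP; exists S => //.
  by rewrite inE; apply/ffun_onP.
apply: le_trans (_ : bound%:R <= _); first by rewrite ler_nat.
rewrite natr_sum mulr_natl -sumr_const; apply: ler_sum => S; rewrite inE => small_S.
rewrite natrX lerXn2r ?nnegrE ?ler0n ?mulr_ge0 ?mulrn_wge0 ?exprn_ge0 //.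
apply: le_trans (_ : (2 * #|S| * #|V|)%:R <= _); first by rewrite ler_nat card_covers.
rewrite !natrM expr2 mulrA; apply: ler_wpM2r => //.
by rewrite !mulrnAl mul1r lerMn2r small_S orbT.
Qed.

Section ProperPairs.
Variables (T : eqType) (x : V -> T).

Definition proper_pairs : pred (V * V) := fun e => x e.1 != x e.2.

(* If fewer than [d n^2] pairs are properly coloured, some colour class has
   more than [(1 - d) n] elements, and its complement covers every proper pair. *)
Lemma few_proper_pairs_small_cover (F : realDomainType) (d : F) :
  #|proper_pairs|%:R < d * #|V|%:R ^+ 2 ->
  exists2 S, S \in small_sets V d & forall e, proper_pairs e -> covers S e.
Proof.
move=> few_proper; pose class u := [set v | x u == x v].
have sum_class : (\sum_u #|class u| = #|[predC proper_pairs]|)%N.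
  rewrite -sum1_card; under eq_bigr do rewrite -sum1dep_card.
  by rewrite pair_big_dep; apply: eq_bigl => -[u v]; rewrite !inE /proper_pairs negbK.
have [u large_u] : exists u, (1 - d) * #|V|%:R < #|class u|%:R.
  apply/existsP; apply: contraLR few_proper => /existsPn small_classes; rewrite -leNgt.
  have sum_le : #|[predC proper_pairs]|%:R <= #|V|%:R * ((1 - d) * #|V|%:R) :> F.
    rewrite -sum_class natr_sum mulr_natl -sumr_const; apply: ler_sum => v _.
    by rewrite leNgt small_classes.
  have := cardC proper_pairs; rewrite card_prod => /(congr1 (GRing.natmul (1 : F))).
  by rewrite natrD natrM expr2; lra.
exists (~: class u).
  by rewrite inE cardsCs setCK natrB ?max_card //; lra.
move=> [v w]; apply: contraTT; rewrite /covers !inE negb_or !negbK /proper_pairs /=.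
by case/andP=> /eqP <- /eqP <-.
Qed.
End ProperPairs.

Lemma proper_colouring_many_proper_pairs (F : realDomainType) (d : F) (M : nat)
    (T : eqType) (x : V -> T) (G : {ffun 'I_M -> V * V}) :
  [forall i, proper_pairs x (G i)] -> ~~ has_small_cover d M G ->
  d * #|V|%:R ^+ 2 <= #|proper_pairs x|%:R.
Proof.
move=> /forallP proper_G; rewrite leNgt.
apply: contra => /few_proper_pairs_small_cover[S small_S cov].
by apply/exists_inP; exists S => //; apply/forallP => i; apply: cov.
Qed.

End Colouring.
Arguments has_small_cover V {F} d M.

Lemma unif_prob_has_small_cover (V : finType) (d : R) (M : nat) :
  (0 < d < 1 / 2)%R -> (0 < #|V|)%N ->
  unif_prob (has_small_cover V d M) <= (d *+ 2) ^+ M * exp (Hent d * INR #|V|).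
Proof.
move=> d_bd V_gt0; have [d_gt0 _] := Rhalf_interval d_bd.
rewrite unif_prob_ffun card_prod natrM -expr2 ler_pdivrMr ?exprn_gt0 ?ltr0n //.
apply: le_trans (card_has_small_cover V M (ltW d_gt0)) _.
rewrite exprMn mulrA [_ * (d *+ 2) ^+ M]mulrC.
apply: ler_wpM2r; first by rewrite !exprn_ge0.
by apply: ler_wpM2l; [rewrite exprn_ge0 ?mulrn_wge0 ?ltW | exact: card_small_sets].
Qed.

Section Satisfiability.
Variables (V : finType) (K : nat) (x : V -> bool).

Definition ksat_ok (e : {ffun 'I_K -> V} * {ffun 'I_K -> bool}) : bool :=
  [ffun j => x (e.1 j)] != e.2.

Definition naesat_ok (e : {ffun 'I_K -> V} * {ffun 'I_K -> bool}) : bool :=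
  ([ffun j => x (e.1 j)] != e.2) && ([ffun j => x (e.1 j)] != [ffun j => ~~ e.2 j]).

Lemma card_naesat_violated : (#|[predC naesat_ok]| <= 2 * #|{ffun 'I_K -> V}|)%N.
Proof.
pose val_of (v : {ffun 'I_K -> V}) := [ffun j => x (v j)].
pose flip (a : {ffun 'I_K -> bool}) := [ffun j => ~~ a j].
apply: leq_trans (_ : #|[set (v, val_of v) | v in {ffun 'I_K -> V}] :|:
                       [set (v, flip (val_of v)) | v in {ffun 'I_K -> V}]| <= _)%N.
  apply/subset_leq_card/subsetP => -[v a].
  rewrite !inE /naesat_ok /= negb_and !negbK.
  case/orP=> /eqP val_v; apply/orP; [left|right]; apply/imsetP; exists v => //.
    by rewrite /val_of val_v.
  by rewrite /flip /val_of val_v; congr pair; apply/ffunP => j; rewrite !ffunE negbK.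
by rewrite mul2n -addnn (leq_trans (leq_card_setU _ _)) // leq_add // leq_imset_card.
Qed.

Lemma half_card_le_naesat_ok : (2 <= K)%N ->
  (#|{: {ffun 'I_K -> V} * {ffun 'I_K -> bool}}| <= 2 * #|naesat_ok|)%N.
Proof.
move=> K_ge2; have := card_naesat_violated.
have : (4 * #|{ffun 'I_K -> V}| <= #|naesat_ok| + #|[predC naesat_ok]|)%N.
  rewrite cardC card_prod mulnC leq_mul2l [#|{ffun 'I_K -> bool}|]card_ffun card_bool card_ord.
  by apply/orP; right; exact: (leq_pexp2l (isT : 0 < 2)%N K_ge2).
rewrite -(cardC naesat_ok).
set n := #|{ffun _ -> V}|; set sat := #|naesat_ok|; set viol := #|[predC _]|; lia.
Qed.

Lemma le_card_naesat_ok (F : realDomainType) (d : F) : (2 <= K)%N -> 0 <= d -> d *+ 2 <= 1 ->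
  d * #|{: {ffun 'I_K -> V} * {ffun 'I_K -> bool}}|%:R <= #|naesat_ok|%:R.
Proof.
move=> /half_card_le_naesat_ok; rewrite -(ler_nat F) natrM mulr2n => half_le d_ge0 d_le.
have := ler0n F #|naesat_ok|; nra.
Qed.

Lemma le_card_ksat_ok (F : realDomainType) (d : F) : (2 <= K)%N -> 0 <= d -> d *+ 2 <= 1 ->
  d * #|{: {ffun 'I_K -> V} * {ffun 'I_K -> bool}}|%:R <= #|ksat_ok|%:R.
Proof.
move=> K_ge2 d_ge0 d_le; apply: le_trans (le_card_naesat_ok K_ge2 d_ge0 d_le) _.
by rewrite ler_nat; apply/subset_leq_card/subsetP => e /andP[].
Qed.

End Satisfiability.

Lemma unif_prob_csp_sat_lower_bound (X E : finType) (ok : X -> E -> bool) (d h : R)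
    (M m : nat) (Bad : pred {ffun 'I_M -> E}) :
  (0 < d < 1 / 2)%R -> (0 < #|E|)%N ->
  (forall G, csp_sat ok M G -> ~~ Bad G ->
     exists2 x, [forall i, ok x (G i)] & d * #|E|%:R <= #|ok x|%:R) ->
  unif_prob Bad <= (d *+ 2) ^+ M * exp h ->
  (unif_prob (csp_sat ok (M + m)) >=
     d ^ m * unif_prob (csp_sat ok M) - (2 * d) ^ (M + 1) * exp (h + - ln (2 * d)))%R.
Proof.
move=> d_bd E_gt0 good Bad_le; have [d_gt0 d_lt] := Rhalf_interval d_bd.
have -> : (2 * d)%R = d *+ 2 by rewrite mulr2n -RplusE; Lra.lra.
have two_d_gt0 : 0 < d *+ 2 by rewrite mulrn_wgt0.
rewrite exp_plus exp_Ropp exp_ln; last exact/RltP.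
apply/Rle_ge/RleP; rewrite !RpowE !RmultE RinvE RminusE.
have -> : (d *+ 2) ^+ (M + 1) * (exp h * (d *+ 2)^-1) = (d *+ 2) ^+ M * exp h.
  by rewrite exprD expr1; field; rewrite lt0r_neq0.
apply: le_trans (unif_prob_csp_sat_extend m _ E_gt0 good).
  by rewrite lerD2l lerN2.
by apply/andP; split; lra.
Qed.

Lemma unif_prob_csp_sat_lower_bound_dense (X E : finType) (ok : X -> E -> bool) (d h : R)
    (M m : nat) :
  (0 < d < 1 / 2)%R -> (0 < #|E|)%N -> (forall x, d * #|E|%:R <= #|ok x|%:R) ->
  (unif_prob (csp_sat ok (M + m)) >=
     d ^ m * unif_prob (csp_sat ok M) - (2 * d) ^ (M + 1) * exp (h + - ln (2 * d)))%R.
Proof.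
move=> d_bd E_gt0 dense; have [d_gt0 _] := Rhalf_interval d_bd.
apply: (@unif_prob_csp_sat_lower_bound _ _ ok d h M m pred0) => // [G /existsP[x sat_G] _|].
  by exists x.
by rewrite unif_prob_ffun card0 mul0r mulr_ge0 ?Rexp_ge0 ?exprn_ge0 ?mulrn_wge0 ?ltW.
Qed.

Lemma cv_const_div_INR (c : R) : Un_cv (fun n => c / INR n)%R 0%R.
Proof.
move=> eps eps_gt0; have [n0 n0_gt] := INR_archimed eps (Rabs c) eps_gt0.
exists n0 => n le_n0n; rewrite /R_dist Rminus_0_r.
have le_INR_n0n : (INR n0 <= INR n)%R by exact: le_INR _ _ le_n0n.
have INR_n_gt0 : (0 < INR n)%R by have := Rabs_pos c; Lra.nra.
rewrite Rabs_mult Rabs_inv (Rabs_right (INR n)); last by Lra.lra.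
apply: (Rmult_lt_reg_r (INR n)) => //; rewrite Rmult_assoc Rinv_l; Lra.nra.
Qed.

Theorem lemma3 :
  forall (mdl : model), valid_model mdl ->
  forall delta : R, (0 < delta < 1 / 2)%R ->
  exists o : nat -> R,
    Un_cv (fun N => (o N / INR N)%R) 0%R /\
    forall N M m : nat, (0 < N)%N -> (0 < M)%N -> (0 < m)%N ->
      (p mdl N (M + m) >=
         delta ^ m * p mdl N M
         - (2 * delta) ^ (M + 1) * exp (Hent delta * INR N + o N))%R.
Proof.
move=> mdl valid d d_bd; exists (fun _ => - ln (2 * d))%R.
split=> [|N M m N_gt0 _ _]; first exact: cv_const_div_INR.
have [d_gt0 d_lt] := Rhalf_interval d_bd.
(* The satisfiability predicates of the three models are [csp_sat] up to conversion. *)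
case: mdl valid => [q|K|K] /= param_ge2.
- apply: (@unif_prob_csp_sat_lower_bound _ _ (fun x : {ffun 'I_N -> 'I_q} => proper_pairs x)
             _ _ _ _ (has_small_cover 'I_N d M)) => //.
  + by rewrite card_prod muln_gt0 card_ord N_gt0.
  + move=> G /existsP[x proper_G] no_cover; exists x => //.
    by rewrite card_prod natrM -expr2; exact: proper_colouring_many_proper_pairs no_cover.
  + by have := @unif_prob_has_small_cover 'I_N d M d_bd; rewrite card_ord; apply.
- apply: (@unif_prob_csp_sat_lower_bound_dense _ _ (fun x : {ffun 'I_N -> bool} => ksat_ok x))
    => // [|x]; last by apply: le_card_ksat_ok; rewrite ?ltW.
  by rewrite card_prod !card_ffun !card_ord muln_gt0 !expn_gt0 N_gt0 card_bool.
- apply: (@unif_prob_csp_sat_lower_bound_dense _ _ (fun x : {ffun 'I_N -> bool} => naesat_ok x))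
    => // [|x]; last by apply: le_card_naesat_ok; rewrite ?ltW.
  by rewrite card_prod !card_ffun !card_ord muln_gt0 !expn_gt0 N_gt0 card_bool.
Qed.
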